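(* Let $q\ge2$ and $BS(1,q)=\langle a,b\mid aba^{-1}=b^q\rangle$. Then $P_0=\{a^n(a^{-m}b^ka^m): k>0,\ m,n\in\mathbb{Z}\}$ is a regular positive cone relative to $\langle a\rangle$. In particular, $P=\{a^n:n>0\}\cup P_0$ is a regular positive cone of $BS(1,q)$.
   Context: For a group $H$ and subgroup $K$, a positive cone relative to $K$ is a subsemigroup $P\subseteq H$ with $H=P\sqcup K\sqcup P^{-1}$; a positive cone is one relative to $\{1\}$. Such a set is regular if there are a finite set $X$, a surjective monoid homomorphism $\pi\colon X^*\to H$ and a language $\mathcal{L}\subseteq X^*$ accepted by a finite state automaton with $\pi(\mathcal{L})=P$. *)

From mathcomp Require Import all_boot all_order all_algebra.
From mathcomp Require Import ring.
Set Implicit Arguments. Unset Strict Implicit. Unset Printing Implicit Defensive.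
Import Order.TTheory GRing.Theory Num.Theory.
Local Open Scope ring_scope.

Section Generic.
Variables (G : Type) (mul : G -> G -> G) (inv : G -> G) (one : G).

Definition zpow (x : G) (n : int) : G :=
  match n with
  | Posz k => iter k (mul x) one
  | Negz k => inv (iter k.+1 (mul x) one)
  end.

Definition subsemigroup (P : G -> Prop) : Prop :=
  forall x y, P x -> P y -> P (mul x y).

Definition set_inv (P : G -> Prop) : G -> Prop :=
  fun g => exists x, P x /\ g = inv x.

Definition positive_cone_rel (K P : G -> Prop) : Prop :=
  subsemigroup P /\
  (forall g, P g \/ K g \/ set_inv P g) /\
  (forall g, ~ (P g /\ K g)) /\
  (forall g, ~ (K g /\ set_inv P g)) /\
  (forall g, ~ (P g /\ set_inv P g)).

Definition positive_cone (P : G -> Prop) : Prop :=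
  positive_cone_rel (fun g => g = one) P.

Definition word_eval (X : Type) (f : X -> G) (w : seq X) : G :=
  foldr (fun x acc => mul (f x) acc) one w.

Definition dfa_accepts (X S : Type) (s0 : S) (delta : S -> X -> S)
  (acc : pred S) (w : seq X) : bool := acc (foldl delta s0 w).

Definition regular_set (P : G -> Prop) : Prop :=
  exists (X : finType) (f : X -> G),
    (forall g, exists w : seq X, word_eval f w = g) /\
    exists (S : finType) (s0 : S) (delta : S -> X -> S) (acc : pred S),
      forall g, P g <-> exists w : seq X, dfa_accepts s0 delta acc w /\ word_eval f w = g.

End Generic.

(* The Baumslag-Solitar group BS(1,q) = <a, b | a b a^-1 = b^q>,      *)
(* realised as Z[1/q] ⋊ Z: the pair (x, n) stands for b^x a^n, with    *)
(* (x, n) (y, m) = (x + q^n y, n + m), a = (0,1), b = (1,0).           *)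

Definition Zinvq (q : nat) (x : rat) : Prop :=
  exists (k : nat) (z : int), x * (q%:R) ^+ k = z%:~R.

Lemma Zinvq_int q (z : int) : Zinvq q z%:~R.
Proof. by exists 0%N, z; rewrite expr0 mulr1. Qed.

Lemma Zinvq_opp q x : Zinvq q x -> Zinvq q (- x).
Proof. by case=> k [z hz]; exists k, (- z); rewrite mulNr hz intrN. Qed.

Lemma Zinvq_add q x y : Zinvq q x -> Zinvq q y -> Zinvq q (x + y).
Proof.
case=> k1 [z1 h1] [k2 [z2 h2]]; exists (k1 + k2)%N, (z1 * (q ^ k2)%N%:Z + z2 * (q ^ k1)%N%:Z).
have -> : (x + y) * (q%:R) ^+ (k1 + k2) =
  (x * (q%:R) ^+ k1) * (q%:R) ^+ k2 + (y * (q%:R) ^+ k2) * (q%:R) ^+ k1.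
  by rewrite exprD; ring.
by rewrite h1 h2 intrD !intrM -!natrX.
Qed.

Lemma Zinvq_scale q (n : int) x : Zinvq q x -> Zinvq q ((q%:R : rat) ^ n * x).
Proof.
case=> l [z hz]; case: n => k.
  exists l, (z * (q ^ k)%N%:Z).
  by rewrite /= -mulrA hz intrM -exprnP -pmulrn natrX mulrC.
have [q0|q0] := eqVneq q 0%N.
  by rewrite q0 NegzE -exprnN expr0n /= invr0 mul0r; exists 0%N, 0; rewrite mul0r.
exists (l + k.+1)%N, z; rewrite NegzE -exprnN exprD -hz.
have hQ : ((q%:R : rat) ^+ k.+1) != 0 by rewrite expf_neq0 // pnatr_eq0.
by field.
Qed.

Definition BS (q : nat) := {x : rat * int | Zinvq q x.1}.

Definition bs_mul (q : nat) (g h : BS q) : BS q :=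
  exist _ ((sval g).1 + (q%:R : rat) ^ (sval g).2 * (sval h).1, (sval g).2 + (sval h).2)
    (Zinvq_add (proj2_sig g) (Zinvq_scale (sval g).2 (proj2_sig h))).

Definition bs_inv (q : nat) (g : BS q) : BS q :=
  exist _ (- ((q%:R : rat) ^ (- (sval g).2) * (sval g).1), - (sval g).2)
    (Zinvq_opp (Zinvq_scale (- (sval g).2) (proj2_sig g))).

Definition bs_one (q : nat) : BS q := exist _ (0, 0) (Zinvq_int q 0).
Definition bs_a (q : nat) : BS q := exist _ (0, 1) (Zinvq_int q 0).
Definition bs_b (q : nat) : BS q := exist _ (1, 0) (Zinvq_int q 1).

Definition bs_pow (q : nat) (g : BS q) (n : int) : BS q :=
  zpow (@bs_mul q) (@bs_inv q) (bs_one q) g n.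

(* Write g = b^x a^n with (x, n) in Z[1/q] x Z, so that x(g h) = x(g) + q^n x(h) and
   x(g^-1) = -q^-n x(g).  The elements a^n (a^-m b^k a^m) with k > 0 are exactly those
   with x > 0 and <a> = {x = 0}; the two formulas make {x > 0} a positive cone relative
   to {x = 0}.  Clearing the denominator of x by q^j writes every g with x > 0 as
   a^-j b^k a^m with k > 0, and conversely every word of (a^-1)^* b^+ {a, a^-1}^* has
   x > 0, by an invariant attached to the states of the automaton reading this language.
   A positive cone relative to a subgroup plus a positive cone of the subgroup is a
   positive cone of the group; {a^n : n > 0} is regular as well, and regular sets over
   the same generators are closed under union. *)

From HB Require Import structures.
From mathcomp Require Import all_boot all_order all_algebra.
From mathcomp Require Import ring lra zify.
From Stdlib Require Import ProofIrrelevance FunctionalExtensionality PropExtensionality.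
Import Order.TTheory GRing.Theory Num.Theory.
Set Implicit Arguments. Unset Strict Implicit. Unset Printing Implicit Defensive.
Local Open Scope ring_scope.

Lemma pred_ext (T : Type) (P P' : T -> Prop) : (forall x, P x <-> P' x) -> P = P'.
Proof.
by move=> PP'; apply: functional_extensionality => x; apply: propositional_extensionality.
Qed.

Section RelativeCones.
Variables (G : Type) (mul : G -> G -> G) (inv : G -> G) (one : G).
Hypothesis mulA : associative mul.
Hypothesis mul1g : left_id one mul.
Hypothesis mulg1 : right_id one mul.
Hypothesis mulVg : left_inverse one inv mul.

Lemma invgK : involutive inv.
Proof. by move=> g; rewrite -[inv (inv g)]mulg1 -(mulVg g) mulA mulVg mul1g. Qed.

Lemma mulgV : right_inverse one inv mul.
Proof. by move=> g; rewrite -{1}(invgK g) mulVg. Qed.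

Lemma mul_eq1_inv x y : mul x y = one -> x = inv y.
Proof. by move=> xy1; rewrite -[x]mulg1 -(mulgV y) mulA xy1 mul1g. Qed.

Lemma set_invE (P : G -> Prop) g : set_inv inv P g <-> P (inv g).
Proof.
by split=> [[x [Px ->]]|Pg]; [rewrite invgK | exists (inv g); rewrite invgK].
Qed.

Definition is_subgroup (K : G -> Prop) : Prop :=
  [/\ K one, forall x y, K x -> K y -> K (mul x y) & forall x, K x -> K (inv x)].

Variable K : G -> Prop.
Hypothesis K_subgroup : is_subgroup K.

Section ConeRelK.
Variable P0 : G -> Prop.
Hypothesis P0_cone : positive_cone_rel mul inv K P0.

Lemma cone_mulK p k : P0 p -> K k -> P0 (mul p k).
Proof.
have [_ KM KV] := K_subgroup.
have [P0M [P0cover [P0K _]]] := P0_cone.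
move=> P0p Kk; case: (P0cover (mul p k)) => [//|[Kpk|/set_invE P0V]].
  case: (P0K p); split=> //.
  by rewrite -[p]mulg1 -(mulgV k) mulA; apply: KM => //; apply: KV.
have Vk : mul (inv (mul p k)) p = inv k by apply: mul_eq1_inv; rewrite -mulA mulVg.
by case: (P0K (inv k)); split; [rewrite -Vk; apply: P0M | apply: KV].
Qed.

Lemma cone_Kmul k p : K k -> P0 p -> P0 (mul k p).
Proof.
have [_ KM KV] := K_subgroup.
have [P0M [P0cover [P0K [KP0V _]]]] := P0_cone.
move=> Kk P0p; case: (P0cover (mul k p)) => [//|[Kkp|/set_invE P0V]].
  case: (P0K p); split=> //.
  by rewrite -[p]mul1g -(mulVg k) -mulA; apply: KM => //; apply: KV.
have Vk : k = inv (mul p (inv (mul k p))) by apply: mul_eq1_inv; rewrite mulA mulgV.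
by case: (KP0V k); split=> //; apply/set_invE; rewrite Vk invgK; apply: P0M.
Qed.

End ConeRelK.

(* Disjointness of [Q] and of [set_inv inv Q] from [one] follows from the last clause. *)
Definition positive_cone_in (Q : G -> Prop) : Prop :=
  [/\ forall g, Q g -> K g, subsemigroup mul Q,
      forall g, K g -> Q g \/ g = one \/ set_inv inv Q g
    & forall g, ~ (Q g /\ set_inv inv Q g)].

Theorem positive_cone_extend P0 Q :
  positive_cone_rel mul inv K P0 -> positive_cone_in Q ->
  positive_cone mul inv one (fun g => Q g \/ P0 g).
Proof.
move=> P0_cone [QK QM Qcover QV].
have [K1 _ KV] := K_subgroup.
have [P0M [P0cover [P0K [KP0V P0V]]]] := P0_cone.
have inv1 : inv one = one by rewrite -[inv one]mulg1 mulVg.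
have notQ1 : ~ Q one by move=> Q1; apply: (QV one); split=> //; apply/set_invE; rewrite inv1.
split; [|split; [|split; [|split]]].
- move=> x y [Qx|P0x] [Qy|P0y].
  + by left; apply: QM.
  + by right; apply: (cone_Kmul P0_cone (QK _ Qx) P0y).
  + by right; apply: (cone_mulK P0_cone P0x (QK _ Qy)).
  + by right; apply: P0M.
- move=> g; case: (P0cover g) => [P0g|[Kg|/set_invE P0Vg]].
  + by left; right.
  + case: (Qcover g Kg) => [Qg|[->|/set_invE QVg]]; first by left; left.
      by right; left.
    by right; right; apply/set_invE; left.
  + by right; right; apply/set_invE; right.
- by move=> g [[Qg|P0g] g1]; subst g; [apply: notQ1 | apply: (P0K one)].
- move=> g [-> /set_invE]; rewrite inv1 => -[//|P01].
  by apply: (P0K one).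
- move=> g [[Qg|P0g] /set_invE [QVg|P0Vg]].
  + by apply: (QV g); split=> //; apply/set_invE.
  + by apply: (KP0V g); split; [apply: QK | apply/set_invE].
  + by apply: (P0K g); split=> //; rewrite -[g]invgK; apply/KV/QK.
  + by apply: (P0V g); split=> //; apply/set_invE.
Qed.

End RelativeCones.

Section Regular.
Variables (G : Type) (mul : G -> G -> G) (one : G) (X : finType) (f : X -> G).

Definition regular_over (P : G -> Prop) : Prop :=
  exists (S : finType) (s0 : S) (delta : S -> X -> S) (acc : pred S),
    forall g, P g <-> exists w, dfa_accepts s0 delta acc w /\ word_eval mul one f w = g.

Lemma regular_over_set P :
  (forall g, exists w, word_eval mul one f w = g) -> regular_over P -> regular_set mul one P.
Proof. by move=> f_onto P_reg; exists X, f. Qed.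

Lemma foldl_pair (S1 S2 : Type) (d1 : S1 -> X -> S1) (d2 : S2 -> X -> S2) s1 s2 w :
  foldl (fun s x => (d1 s.1 x, d2 s.2 x)) (s1, s2) w = (foldl d1 s1 w, foldl d2 s2 w).
Proof. by elim: w s1 s2 => //= x w IH s1 s2; rewrite IH. Qed.

Lemma regular_overU P1 P2 :
  regular_over P1 -> regular_over P2 -> regular_over (fun g => P1 g \/ P2 g).
Proof.
move=> [S1 [s1 [d1 [acc1 P1E]]]] [S2 [s2 [d2 [acc2 P2E]]]].
exists (S1 * S2)%type, (s1, s2), (fun s x => (d1 s.1 x, d2 s.2 x)).
exists (fun s => acc1 s.1 || acc2 s.2) => g; split.
  case=> [/P1E|/P2E] [w [accw <-]]; exists w; split=> //; move: accw;
  by rewrite /dfa_accepts foldl_pair /= => ->; rewrite ?orbT.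
case=> w []; rewrite /dfa_accepts foldl_pair => /orP[acc1w|acc2w] <-.
  by left; apply/P1E; exists w.
by right; apply/P2E; exists w.
Qed.

Lemma word_eval_nseq k x : word_eval mul one f (nseq k x) = iter k (mul (f x)) one.
Proof. by elim: k => //= k ->. Qed.

Lemma word_eval_cat : associative mul -> left_id one mul -> forall w1 w2,
  word_eval mul one f (w1 ++ w2) = mul (word_eval mul one f w1) (word_eval mul one f w2).
Proof. by move=> mulA mul1g; elim=> [|x w1 IH] w2 /=; rewrite ?mul1g ?IH ?mulA. Qed.

End Regular.

(* [LA] and [LB] stand for a^-1 and b^-1. *)
Inductive letter := La | LA | Lb | LB.

Definition letter_code (l : letter) : bool * bool :=
  match l with
  | La => (false, false) | LA => (false, true) | Lb => (true, false) | LB => (true, true)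
  end.
Definition code_letter (c : bool * bool) : letter :=
  match c with
  | (false, false) => La | (false, true) => LA | (true, false) => Lb | (true, true) => LB
  end.
Lemma letter_codeK : cancel letter_code code_letter. Proof. by case. Qed.
HB.instance Definition _ := Finite.copy letter (can_type letter_codeK).

Definition int_word (pos neg : letter) (n : int) : seq letter :=
  nseq `|n|%N (if 0 <= n then pos else neg).

Inductive nf_state := Lead | Mid | Tail.

Definition nf_state_code (s : nf_state) : option bool :=
  match s with Lead => None | Mid => Some false | Tail => Some true end.
Definition code_nf_state (c : option bool) : nf_state :=
  match c with None => Lead | Some false => Mid | Some true => Tail end.
Lemma nf_state_codeK : cancel nf_state_code code_nf_state. Proof. by case. Qed.
HB.instance Definition _ := Finite.copy nf_state (can_type nf_state_codeK).

(* Reads (a^-1)^* b^+ {a, a^-1}^*; [None] is the dead state. *)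
Definition nf_delta (s : option nf_state) (l : letter) : option nf_state :=
  match s, l with
  | Some Lead, LA => Some Lead
  | Some (Lead | Mid), Lb => Some Mid
  | Some (Mid | Tail), (La | LA) => Some Tail
  | _, _ => None
  end.

Definition nf_accept (s : option nf_state) : bool :=
  if s is Some (Mid | Tail) then true else false.

Lemma nf_run_LA j : foldl nf_delta (Some Lead) (nseq j LA) = Some Lead.
Proof. by elim: j. Qed.

Lemma nf_run_Lb k : foldl nf_delta (Some Lead) (nseq k.+1 Lb) = Some Mid.
Proof. by rewrite /=; elim: k. Qed.

Lemma nf_accept_a_word n : nf_accept (foldl nf_delta (Some Mid) (int_word La LA n)).
Proof.
rewrite /int_word; case: `|n|%N => [//|k] /=.
by case: (0 <= n); elim: k.
Qed.

(* [Some false]: nothing read yet; [Some true]: a nonempty power of [La] read. *)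
Definition apos_delta (s : option bool) (l : letter) : option bool :=
  if (s, l) is (Some _, La) then Some true else None.

Lemma apos_accepts w :
  (foldl apos_delta (Some false) w == Some true) = (0 < size w)%N && all (pred1 La) w.
Proof.
have dead v : foldl apos_delta None v = None by elim: v.
have from_true v : (foldl apos_delta (Some true) v == Some true) = all (pred1 La) v.
  by elim: v => //= l v IH; case: l; rewrite /= ?dead.
by case: w => [|[] w] //=; rewrite ?dead.
Qed.

Section BaumslagSolitar.
Variable q : nat.
Hypothesis q_gt0 : (0 < q)%N.
Local Notation Q := (q%:R : rat).
Local Notation bs_x g := (sval g).1.
Local Notation bs_n g := (sval g).2.

Lemma Q_neq0 : Q != 0. Proof. by rewrite pnatr_eq0 -lt0n. Qed.
Lemma Q_exprz_gt0 (n : int) : 0 < Q ^ n. Proof. by rewrite exprz_gt0 // ltr0n. Qed.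

Lemma bs_eq (g h : BS q) : sval g = sval h -> g = h.
Proof. by case: g h => [g Zg] [h Zh] /= gh; subst h; rewrite (proof_irrelevance _ Zg Zh). Qed.

Lemma bs_mulA : associative (@bs_mul q).
Proof.
move=> g h k; apply: bs_eq; rewrite /= addrA; congr (_, _).
by rewrite expfzDr ?Q_neq0 //; ring.
Qed.

Lemma bs_mul1g : left_id (bs_one q) (@bs_mul q).
Proof. by move=> g; apply: bs_eq; rewrite /= expr0z mul1r !add0r; case: (sval g). Qed.

Lemma bs_mulg1 : right_id (bs_one q) (@bs_mul q).
Proof. by move=> g; apply: bs_eq; rewrite /= mulr0 !addr0; case: (sval g). Qed.

Lemma bs_mulVg : left_inverse (bs_one q) (@bs_inv q) (@bs_mul q).
Proof. by move=> g; apply: bs_eq; rewrite /= !addNr. Qed.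

Lemma bs_set_invE (P : BS q -> Prop) g : set_inv (@bs_inv q) P g <-> P (bs_inv g).
Proof. exact: set_invE bs_mulA bs_mul1g bs_mulg1 bs_mulVg P g. Qed.

Lemma val_iter_x0 g k : bs_x g = 0 -> sval (iter k (bs_mul g) (bs_one q)) = (0, bs_n g *+ k).
Proof.
move=> gx; elim: k => [//|k IH]; rewrite iterS /= IH gx mulr0 addr0.
by rewrite mulrS.
Qed.

Lemma val_iter_n0 g k : bs_n g = 0 -> sval (iter k (bs_mul g) (bs_one q)) = (bs_x g *+ k, 0).
Proof.
move=> gn; elim: k => [//|k IH]; rewrite iterS /= IH gn expr0z mul1r add0r.
by rewrite mulrS.
Qed.

Lemma val_inv (g : BS q) : sval (bs_inv g) = (- (Q ^ (- bs_n g) * bs_x g), - bs_n g).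
Proof. by []. Qed.

Lemma val_pow_a (n : int) : sval (bs_pow (bs_a q) n) = (0, n).
Proof.
by case: n => k; rewrite /bs_pow /zpow ?val_inv val_iter_x0 //= ?mulr0 ?oppr0 natz ?NegzE.
Qed.

Lemma val_pow_b (n : int) : sval (bs_pow (bs_b q) n) = (n%:~R, 0).
Proof.
case: n => k; rewrite /bs_pow /zpow ?val_inv val_iter_n0 //=.
by rewrite oppr0 expr0z mul1r NegzE mulrNz.
Qed.

Definition bs_xpos (g : BS q) : Prop := 0 < bs_x g.
Definition bs_xzero (g : BS q) : Prop := bs_x g = 0.
Definition bs_apos (g : BS q) : Prop := bs_x g = 0 /\ 0 < bs_n g.

Lemma bs_xposE :
  (fun g => exists n m k : int, 0 < k /\
     g = bs_mul (bs_pow (bs_a q) n)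
           (bs_mul (bs_mul (bs_pow (bs_a q) (- m)) (bs_pow (bs_b q) k)) (bs_pow (bs_a q) m)))
  = bs_xpos.
Proof.
apply: pred_ext => g; split.
  case=> n [m [k [k_gt0 ->]]]; rewrite /bs_xpos /= !val_pow_a !val_pow_b /=.
  rewrite !mulr0 !addr0 !add0r; apply: mulr_gt0; first exact: Q_exprz_gt0.
  by apply: mulr_gt0; [exact: Q_exprz_gt0 | rewrite ltr0z].
case: g => [[x t] [j [z xz]]]; rewrite /bs_xpos /= => x_gt0.
have z_gt0 : 0 < z by rewrite -(ltr0z rat) -xz mulr_gt0 // exprn_gt0 // ltr0n.
exists t, (t + j%:Z), z; split=> //; apply: bs_eq.
rewrite /= !val_pow_a !val_pow_b /= !mulr0 !addr0 !add0r; congr (_, _); last by lia.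
rewrite mulrA -expfzDr ?Q_neq0 // opprD addNKr -exprnN -xz /=.
by rewrite mulrC mulfK // expf_neq0 // Q_neq0.
Qed.

Lemma bs_xzeroE : (fun g => exists n : int, g = bs_pow (bs_a q) n) = bs_xzero.
Proof.
apply: pred_ext => g; split; first by case=> n ->; rewrite /bs_xzero val_pow_a.
rewrite /bs_xzero => gx; exists (bs_n g); apply: bs_eq; rewrite val_pow_a -gx.
by case: (sval g).
Qed.

Lemma bs_aposE : (fun g => exists n : int, 0 < n /\ g = bs_pow (bs_a q) n) = bs_apos.
Proof.
apply: pred_ext => g; split; first by case=> n [n_gt0 ->]; rewrite /bs_apos val_pow_a.
case=> gx gn; exists (bs_n g); split=> //; apply: bs_eq; rewrite val_pow_a -gx.
by case: (sval g).
Qed.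

Lemma bs_xzero_subgroup : is_subgroup (@bs_mul q) (@bs_inv q) (bs_one q) bs_xzero.
Proof.
rewrite /bs_xzero; split=> //= [g h -> ->|g ->].
  by rewrite mulr0 addr0.
by rewrite mulr0 oppr0.
Qed.

Lemma bs_xpos_inv g : bs_xpos (bs_inv g) <-> bs_x g < 0.
Proof. by rewrite /bs_xpos /= oppr_gt0 pmulr_rlt0 // Q_exprz_gt0. Qed.

Lemma bs_xpos_cone : positive_cone_rel (@bs_mul q) (@bs_inv q) bs_xzero bs_xpos.
Proof.
have invE g : set_inv (@bs_inv q) bs_xpos g <-> bs_x g < 0.
  by rewrite bs_set_invE bs_xpos_inv.
rewrite /bs_xpos /bs_xzero; split; [|split; [|split; [|split]]].
- by move=> g h /= gx hx; rewrite addr_gt0 // mulr_gt0 // Q_exprz_gt0.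
- move=> g; rewrite invE; case: (ltrgtP (bs_x g) 0) => gx.
  + by right; right.
  + by left.
  + by right; left.
- by move=> g [gx g0]; lra.
- by move=> g [g0 /invE gx]; lra.
- by move=> g [gx /invE gx']; lra.
Qed.

Lemma bs_apos_cone : positive_cone_in (@bs_mul q) (@bs_inv q) (bs_one q) bs_xzero bs_apos.
Proof.
rewrite /bs_apos /bs_xzero; split.
- by move=> g [].
- by move=> g h [/= gx gn] [hx hn]; rewrite gx hx mulr0 addr0 addr_gt0.
- move=> g gx; rewrite bs_set_invE /= gx mulr0 oppr0 oppr_gt0.
  case: (ltrgtP (bs_n g) 0) => gn.
  + by right; right.
  + by left.
  + by right; left; apply: bs_eq; move: gx gn; case: (sval g) => x n /= -> ->.
- by move=> g [[gx gn]] /bs_set_invE [_ /=]; rewrite oppr_gt0; lia.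
Qed.

Definition letter_val (l : letter) : BS q :=
  match l with
  | La => bs_a q | LA => bs_inv (bs_a q) | Lb => bs_b q | LB => bs_inv (bs_b q)
  end.

Local Notation eval := (word_eval (@bs_mul q) (bs_one q) letter_val).

Lemma eval_cat w1 w2 : eval (w1 ++ w2) = bs_mul (eval w1) (eval w2).
Proof. exact: word_eval_cat bs_mulA bs_mul1g w1 w2. Qed.

Lemma eval_nseq_La k : sval (eval (nseq k La)) = (0, k%:Z).
Proof. by rewrite word_eval_nseq -[iter _ _ _]/(bs_pow (bs_a q) k) val_pow_a. Qed.

Lemma eval_nseq_LA j : sval (eval (nseq j LA)) = (0, - j%:Z).
Proof. by rewrite word_eval_nseq val_iter_x0 /= ?mulr0 ?oppr0 // mulNrn natz. Qed.

Lemma eval_a_word n : sval (eval (int_word La LA n)) = (0, n).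
Proof.
case: n => k; last by rewrite -[int_word _ _ _]/(nseq k.+1 LA) eval_nseq_LA NegzE.
by rewrite -[int_word _ _ _]/(nseq k La) eval_nseq_La.
Qed.

Lemma eval_b_word z : sval (eval (int_word Lb LB z)) = (z%:~R, 0).
Proof.
rewrite /int_word word_eval_nseq val_iter_n0; case: z => k //=.
by rewrite oppr0 expr0z mul1r NegzE mulrNz mulNrn -pmulrn.
Qed.

Definition normal_word (j : nat) (z t : int) : seq letter :=
  nseq j LA ++ int_word Lb LB z ++ int_word La LA (t + j%:Z).

Lemma eval_normal_word x t j z :
  x * Q ^+ j = z%:~R -> sval (eval (normal_word j z t)) = (x, t).
Proof.
move=> xz; rewrite !eval_cat /= eval_nseq_LA eval_b_word eval_a_word /=.
rewrite mulr0 addr0 add0r -exprnN -xz; congr (_, _); last by lia.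
by rewrite mulrC mulfK // expf_neq0 // Q_neq0.
Qed.

Lemma eval_surj g : exists w, eval w = g.
Proof.
case: g => [[x t] [j [z xz]]]; exists (normal_word j z t).
by apply: bs_eq; apply: eval_normal_word.
Qed.

Definition nf_inv (s : option nf_state) (g : BS q) : Prop :=
  match s with
  | Some Lead => 0 < bs_x g
  | Some Mid => 0 <= bs_x g
  | Some Tail => bs_x g = 0
  | None => False
  end.

Lemma nf_sound s w : nf_accept (foldl nf_delta s w) -> nf_inv s (eval w).
Proof.
elim: w s => [|l w IH] s /=; first by case: s => [[]|] //= _; apply: lexx.
move=> /IH; case: s => [[]|] //; case: l => //= gx.
all: rewrite ?mulr0 ?oppr0 ?add0r ?expr0z ?mul1r; try by rewrite gx mulr0.
- by rewrite mulr_gt0 // Q_exprz_gt0.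
all: lra.
Qed.

Lemma nf_complete g : 0 < bs_x g ->
  exists w, nf_accept (foldl nf_delta (Some Lead) w) /\ eval w = g.
Proof.
case: g => [[x t] [j [z xz]]] /= x_gt0.
have z_gt0 : 0 < z by rewrite -(ltr0z rat) -xz mulr_gt0 // exprn_gt0 // ltr0n.
exists (normal_word j z t); split; last by apply: bs_eq; apply: eval_normal_word.
have zk : `|z|%N = (`|z|.-1).+1 by rewrite prednK // absz_gt0 lt0r_neq0.
rewrite /normal_word !foldl_cat nf_run_LA /int_word zk (ltW z_gt0) nf_run_Lb.
exact: nf_accept_a_word.
Qed.

Lemma bs_xpos_regular : regular_over (@bs_mul q) (bs_one q) letter_val bs_xpos.
Proof.
exists (option nf_state), (Some Lead), nf_delta, nf_accept => g.
split; first exact: nf_complete.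
by case=> w [/nf_sound gx <-].
Qed.

Lemma bs_apos_regular : regular_over (@bs_mul q) (bs_one q) letter_val bs_apos.
Proof.
exists (option bool), (Some false), apos_delta, (pred1 (Some true)) => g; split.
  case=> gx gn; exists (nseq `|bs_n g| La); split.
    by rewrite /dfa_accepts /= apos_accepts size_nseq all_pred1_nseq absz_gt0 lt0r_neq0.
  apply: bs_eq; rewrite eval_nseq_La gez0_abs ?ltW // -gx.
  by case: (sval g).
case=> w []; rewrite /dfa_accepts /= apos_accepts => /andP[w_gt0 /all_pred1P ->] <-.
by rewrite /bs_apos eval_nseq_La ltz_nat.
Qed.

End BaumslagSolitar.

Theorem lemma3p13 (q : nat) (hq : (2 <= q)%N) :
  let a := bs_a q in
  let b := bs_b q in
  let P0 : BS q -> Prop := fun g =>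
    exists (n m k : int), 0 < k /\
      g = bs_mul (bs_pow a n) (bs_mul (bs_mul (bs_pow a (- m)) (bs_pow b k)) (bs_pow a m)) in
  let K : BS q -> Prop := fun g => exists n : int, g = bs_pow a n in
  let P : BS q -> Prop := fun g => (exists n : int, 0 < n /\ g = bs_pow a n) \/ P0 g in
  (positive_cone_rel (@bs_mul q) (@bs_inv q) K P0 /\
   regular_set (@bs_mul q) (bs_one q) P0) /\
  (positive_cone (@bs_mul q) (@bs_inv q) (bs_one q) P /\
   regular_set (@bs_mul q) (bs_one q) P).
Proof.
move=> a b P0 K P.
have q_gt0 : (0 < q)%N by apply: ltnW.
have P0E : P0 = @bs_xpos q := bs_xposE q_gt0.
have KE : K = @bs_xzero q := bs_xzeroE q.
have PE : P = fun g => @bs_apos q g \/ @bs_xpos q g by rewrite -P0E -(bs_aposE q).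
rewrite PE P0E KE; have onto := eval_surj q_gt0.
split; split.
- exact: bs_xpos_cone.
- exact: (regular_over_set onto (bs_xpos_regular q_gt0)).
- exact: (positive_cone_extend (bs_mulA q_gt0) (@bs_mul1g q) (@bs_mulg1 q) (@bs_mulVg q)
    (@bs_xzero_subgroup q) (bs_xpos_cone q_gt0) (bs_apos_cone q_gt0)).
- exact: (regular_over_set onto (regular_overU (@bs_apos_regular q) (bs_xpos_regular q_gt0))).
Qed.
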